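(* Let $G$ be the toroidal $L$-grid, let $r$ be a positive integer with $r\le L-2$, and let $\mathscr{S}$ be the block system consisting of all $r\times r$ subgrids of $G$. Then $\mu^+(\mathscr{S})\le 2+\frac2r$.
   Context: The toroidal $L$-grid has vertex set $(\mathbb{Z}/L\mathbb{Z})^2$, with $(a,b)\sim(c,d)$ iff ($a-c=\pm1$ and $b=d$) or ($b-d=\pm1$ and $a=c$) in $\mathbb{Z}/L\mathbb{Z}$. An $r\times r$ subgrid is a set $\{(a+i,b+j):0\le i,j\le r-1\}$. Potts configurations: $\sigma\in\Omega=[q]^V$, $q$ a positive integer. For $S\subseteq V$, $\partial S$ is the set of vertices outside $S$ with a neighbour in $S$. For $X\in\Omega$, $c\in[q]^S$: $X^{(S,c)}$ equals $c$ on $S$ and $X$ off $S$; $\mu_{X,S}(c)$ is the number of monochromatic edges of $X^{(S,c)}$ incident with at least one vertex of $S$. A colour used by $c$ is free with respect to $X,S$ if it does not occur among $\{X(u):u\in\partial S\}$; $f(X,S,c)$ is the number of free colours used by $c$. $\mu^+_{X,S,f}=\max\{\mu_{X,S}(c)/(|S|-f): c\in[q]^S,\ f(X,S,c)=f\}$ (empty maximum $=0$), and $\mu^+(\mathscr{S})=\max_{S\in\mathscr{S}}\max_{X\in\Omega}\max_{f\in\{0,\dots,|S|-1\}}\mu^+_{X,S,f}$. *)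

From HB Require Import structures.
From mathcomp Require Import all_boot all_order all_algebra.
Set Implicit Arguments. Unset Strict Implicit. Unset Printing Implicit Defensive.
Import Order.TTheory GRing.Theory Num.Theory.

(* Vertices of the toroidal L-grid: (Z/LZ)^2, represented by 'I_L * 'I_L. *)
Definition V (L : nat) : finType := ('I_L * 'I_L)%type.

Definition pm1 (L : nat) (a c : 'I_L) : bool :=
  (val a == (val c + 1) %% L) || (val c == (val a + 1) %% L).

Definition adj (L : nat) (u v : V L) : bool :=
  (pm1 u.1 v.1 && (u.2 == v.2)) || (pm1 u.2 v.2 && (u.1 == v.1)).

Definition edges (L : nat) : {set {set V L}} :=
  [set e : {set V L} | [exists u : V L, exists v : V L, adj u v && (e == [set u; v])]].

Definition subgrid (L r : nat) (a b : 'I_L) : {set V L} :=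
  [set v : V L | [exists i : 'I_r, exists j : 'I_r,
     (val v.1 == (val a + val i) %% L) && (val v.2 == (val b + val j) %% L)]].

Definition subgrids (L r : nat) : {set {set V L}} :=
  [set subgrid r a b | a : 'I_L, b : 'I_L].

Definition boundary (L : nat) (S : {set V L}) : {set V L} :=
  [set u : V L | (u \notin S) && [exists v in S, adj u v]].

Definition patch (L q : nat) (X c : {ffun V L -> 'I_q}) (S : {set V L})
  : {ffun V L -> 'I_q} :=
  [ffun v => if v \in S then c v else X v].

Definition mu (L q : nat) (X : {ffun V L -> 'I_q}) (S : {set V L})
  (c : {ffun V L -> 'I_q}) : nat :=
  let Y := patch X c S in
  #|[set e in edges L | (e :&: S != set0) &&
        [forall u in e, forall v in e, Y u == Y v]]|.

Definition fcount (L q : nat) (X : {ffun V L -> 'I_q}) (S : {set V L})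
  (c : {ffun V L -> 'I_q}) : nat :=
  #|[set k : 'I_q | [exists v in S, c v == k] &&
                    [forall u in boundary S, X u != k]]|.

Local Open Scope ring_scope.

(* mu^+_{X,S,f}; empty maximum = 0 *)
Definition mu_plus_XSf (L q : nat) (X : {ffun V L -> 'I_q}) (S : {set V L})
  (f : nat) : rat :=
  \big[Num.max/0]_(c : {ffun V L -> 'I_q} | fcount X S c == f)
     ((mu X S c)%:R / (#|S| - f)%:R).

Definition mu_plus (L q : nat) (SS : {set {set V L}}) : rat :=
  \big[Num.max/0]_(S in SS) \big[Num.max/0]_(X : {ffun V L -> 'I_q})
     \big[Num.max/0]_(f < #|S|) mu_plus_XSf X S f.

From HB Require Import structures.
From mathcomp Require Import all_boot all_order all_algebra.
From mathcomp Require Import zify ring.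
Set Implicit Arguments. Unset Strict Implicit. Unset Printing Implicit Defensive.

(* Fix a subgrid S, an outside configuration X and a colouring c of S, with
   f free colours.  Cut S into r horizontal lines, each extended by one
   boundary vertex at both ends, and read the colours of X^(S,c) along a line:
   r + 2 colours whose two ends are not free.  Every free colour used on the
   line forces a colour change, and one more change is needed to return to a
   non-free colour, so a line with d free colours has at most r - d
   monochromatic steps if d > 0 (and r + 1 otherwise); in both cases
   r * steps + (r + 1) * d <= (r + 1) * r  (line_bound).  Summing over the
   lines, each free colour being used on some line, gives
   r * steps + (r + 1) * f <= (r + 1) * r^2  (family_bound).  The same holds
   for the vertical lines, and every monochromatic edge meeting S is a step of
   one of the 2r lines (mu_le_mono_steps), hence
   r * mu + 2 (r + 1) f <= 2 (r + 1) r^2  (subgrid_mu_bound), which is the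
   claimed bound on mu / (r^2 - f). *)

Section ColourSequence.
Variables (T : finType) (col : nat -> T) (free : pred T).

Definition free_used (m : nat) : {set T} :=
  [set k | free k & k \in [seq col p | p <- iota 0 m.+1]].

Definition changes (m : nat) : nat := \sum_(p < m) (col p != col p.+1).

Lemma free_usedS m :
  free_used m.+1 = free_used m :|: [set k | free k & k == col m.+1].
Proof.
rewrite /free_used.
have -> : iota 0 m.+2 = iota 0 m.+1 ++ [:: m.+1] by rewrite -addn1 iotaD add0n.
rewrite map_cat; apply/setP => k; rewrite in_setU !in_set mem_cat mem_seq1.
by case: (free k).
Qed.

(* Starting from a non-free colour, each new free colour costs a change, and
   ending on a non-free colour after some free one costs one more. *)
Lemma free_used_changes m : ~~ free (col 0) ->
  #|free_used m| + (~~ free (col m) && (free_used m != set0)) <= changes m.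
Proof.
move=> free0; elim: m => [|m IH].
  have -> : free_used 0 = set0.
    apply/setP => k; rewrite !inE.
    by apply/andP => -[fk /eqP ek]; rewrite -ek fk in free0.
  by rewrite cards0 eqxx andbF.
rewrite /changes big_ord_recr /= -/(changes m) free_usedS.
have [same|_] := eqVneq (col m) (col m.+1); rewrite ?addn0 ?addn1.
- (* a repeated colour is free iff it was, and it is already recorded *)
  suff /setUidPl -> : [set k | free k & k == col m.+1] \subset free_used m.
    by rewrite -same.
  apply/subsetP => k; rewrite !in_set => /andP[-> /eqP ->].
  by rewrite -same andTb map_f // mem_iota; lia.
- case fm1: (free (col m.+1)) => /=.
  + (* a new free colour can appear, and it closes any pending run *)
    rewrite addn0; apply: leq_trans (leq_card_setU _ _) _.
    have : #|[set k | free k & k == col m.+1]| <= 1.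
      rewrite -(cards1 (col m.+1)); apply/subset_leq_card/subsetP => k.
      by rewrite !inE => /andP[].
    by move: IH; lia.
  + have -> : [set k | free k & k == col m.+1] = set0.
      by apply/setP => k; rewrite !inE; apply/andP => -[fk /eqP ek]; rewrite ek fm1 in fk.
    by rewrite setU0; move: IH; case: (_ != _); case: (~~ _) => /=; lia.
Qed.

(* The estimate for one line with non-free ends: r + 1 steps, of which the
   monochromatic ones are those that are not changes. *)
Lemma line_bound r : ~~ free (col 0) -> ~~ free (col r.+1) ->
  r * (\sum_(p < r.+1) (col p == col p.+1)) + r.+1 * #|free_used r.+1|
    <= r.+1 * r.
Proof.
move=> free0 free1; have := free_used_changes r.+1 free0; rewrite free1 /=.
have split : \sum_(p < r.+1) (col p == col p.+1) + changes r.+1 = r.+1.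
  rewrite /changes -big_split /= (eq_bigr (fun=> 1)) ?sum1_card ?card_ord //.
  by move=> p _; case: (_ == _).
move: split; set mono := \sum_(p < _) _ => split.
have [-> | _] := eqVneq (free_used r.+1) set0; rewrite ?cards0 /= => used.
  by rewrite muln0 addn0 [r.+1 * r]mulnC leq_mul2l; apply/orP; right; lia.
have bound : mono + #|free_used r.+1| <= r by lia.
have := leq_mul (leqnn r) bound; nia.
Qed.

End ColourSequence.

Lemma card_bigcup_le (I T : finType) (F : I -> {set T}) :
  #|\bigcup_i F i| <= \sum_i #|F i|.
Proof.
elim/big_ind2 : _ => [|m A n B Am Bn|i _]; rewrite ?cards0 //.
by rewrite (leq_trans (leq_card_setU _ _)) ?leq_add.
Qed.

Lemma pm1_sym L (x y : 'I_L) : pm1 x y = pm1 y x.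
Proof. by rewrite /pm1 orbC. Qed.

Lemma adj_sym L (u v : V L) : adj u v = adj v u.
Proof. by rewrite /adj pm1_sym [pm1 u.2 _]pm1_sym (eq_sym u.1) (eq_sym u.2). Qed.

Section LinesThroughBlock.
Variables (L q r : nat) (X c : {ffun V L -> 'I_q}) (S : {set V L}).

Let Y := patch X c S.

Definition free_colour (k : 'I_q) : bool := [forall u in boundary S, X u != k].

Lemma boundary_not_free u : u \in boundary S -> ~~ free_colour (Y u).
Proof.
move=> uB; have : u \notin S by move: uB; rewrite inE => /andP[].
rewrite /Y /patch ffunE => /negbTE ->.
by apply/forallP => /(_ u); rewrite uB eqxx.
Qed.

Definition mono_steps (I : finType) (ln : I -> nat -> V L) : nat :=
  \sum_i \sum_(p < r.+1) (Y (ln i p) == Y (ln i p.+1)).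

(* A family of lines which start and end on the boundary of S and pass
   through every vertex of S: summing line_bound, and noting that every free
   colour used in S is used on some line, bounds the monochromatic steps. *)
Lemma family_bound (I : finType) (ln : I -> nat -> V L) :
  (forall i, ln i 0 \in boundary S /\ ln i r.+1 \in boundary S) ->
  (forall v, v \in S -> exists i p, p <= r.+1 /\ v = ln i p) ->
  r * mono_steps ln + r.+1 * fcount X S c <= r.+1 * (#|I| * r).
Proof.
move=> ends cover.
pose D i := free_used (fun p => Y (ln i p)) free_colour r.+1.
have per_line i : r * (\sum_(p < r.+1) (Y (ln i p) == Y (ln i p.+1)))
                  + r.+1 * #|D i| <= r.+1 * r.
  by have [e0 e1] := ends i; apply: line_bound; apply: boundary_not_free.
have used_on_lines : fcount X S c <= \sum_i #|D i|.
  apply: leq_trans (card_bigcup_le D); apply/subset_leq_card/subsetP => k.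
  rewrite inE => /andP[/existsP[v /andP[vS /eqP ck]] fk].
  have [i [p [pr ev]]] := cover v vS.
  apply/bigcupP; exists i => //; rewrite inE; apply/andP; split; first exact: fk.
  apply/mapP; exists p; first by rewrite mem_iota.
  by rewrite -ev /Y /patch ffunE vS ck.
have : \sum_i (r * (\sum_(p < r.+1) (Y (ln i p) == Y (ln i p.+1)))
               + r.+1 * #|D i|) <= \sum_(i : I) r.+1 * r.
  by apply: leq_sum => i _; apply: per_line.
rewrite big_split /= -!big_distrr sum_nat_const /= -/(mono_steps ln).
rewrite (_ : #|xpredT| = #|I|) //; apply: leq_trans.
by rewrite leq_add2l leq_mul2l used_on_lines orbT.
Qed.

Lemma mu_le_mono_steps (I : finType) (ln1 ln2 : I -> nat -> V L) :
  (forall u v, u \in S -> adj u v -> exists i (p : 'I_r.+1),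
     [set u; v] = [set ln1 i p; ln1 i p.+1] \/
     [set u; v] = [set ln2 i p; ln2 i p.+1]) ->
  mu X S c <= mono_steps ln1 + mono_steps ln2.
Proof.
move=> on_lines.
pose steps (ln : I -> nat -> V L) :=
  [set x : I * 'I_r.+1 | Y (ln x.1 x.2) == Y (ln x.1 x.2.+1)].
pose step_edge (ln : I -> nat -> V L) (x : I * 'I_r.+1) := [set ln x.1 x.2; ln x.1 x.2.+1].
have card_steps (ln : I -> nat -> V L) : #|steps ln| = mono_steps ln.
  rewrite /mono_steps pair_big -sum1dep_card big_mkcond.
  by apply: eq_bigr => x _; case: (_ == _).
have step_mono (ln : I -> nat -> V L) i p :
    [forall u in [set ln i p; ln i p.+1], forall v in [set ln i p; ln i p.+1],
       Y u == Y v] -> Y (ln i p) == Y (ln i p.+1).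
  by move=> /forallP /(_ (ln i p)); rewrite set21 => /forallP /(_ (ln i p.+1)); rewrite set22.
have cover : [set e in edges L | (e :&: S != set0) &&
                 [forall u in e, forall v in e, Y u == Y v]]
    \subset step_edge ln1 @: steps ln1 :|: step_edge ln2 @: steps ln2.
  apply/subsetP => e; rewrite !inE => /and3P[].
  move=> /existsP[u /existsP[v /andP[uv /eqP ->]]] /set0Pn[w].
  rewrite !inE => /andP[wuv wS].
  have [x [y [xS xy ->]]] : exists x y, [/\ x \in S, adj x y & [set u; v] = [set x; y]].
    case/orP: wuv => /eqP ew; rewrite ew in wS; first by exists u, v.
    by exists v, u; rewrite adj_sym setUC.
  have [i [p [->|->]]] := on_lines x y xS xy => /step_mono mono; apply/orP.
    by left; apply/imsetP; exists (i, p); rewrite ?inE.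
  by right; apply/imsetP; exists (i, p); rewrite ?inE.
rewrite /mu (leq_trans (subset_leq_card cover)) //.
by rewrite (leq_trans (leq_card_setU _ _)) // -!card_steps leq_add ?leq_imset_card.
Qed.

End LinesThroughBlock.

Lemma in_boundary L (S : {set V L}) u v :
  u \notin S -> v \in S -> adj u v -> u \in boundary S.
Proof. by rewrite inE => -> vS uv; apply/existsP; exists v; rewrite vS uv. Qed.

Section TorusSubgrid.
Variables (L' r : nat) (a b : 'I_L'.+1).
Hypothesis r_lt : r < L'.

Definition wrap (t : nat) : 'I_L'.+1 := Ordinal (ltn_pmod t (ltn0Sn L')).

(* cell x y is the vertex at offset (x - 1, y - 1) from the corner (a, b):
   cells with 1 <= x, y <= r form the subgrid, and x or y in {0, r+1}
   reaches just outside it. *)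
Definition cell (x y : nat) : V L'.+1 := (wrap (a + L' + x), wrap (b + L' + y)).

Definition hline (i : 'I_r) (p : nat) : V L'.+1 := cell i.+1 p.
Definition vline (j : 'I_r) (p : nat) : V L'.+1 := cell p j.+1.

(* Position x of a line is the cell of index i < r of the subgrid iff x = i+1. *)
Lemma wrap_offset s x i : x <= L' -> i < L' ->
  (s + L' + x == s + i %[mod L'.+1]) = (x == i.+1).
Proof.
move=> xL iL; rewrite -addnA eqn_modDl addnC -(eqn_modDr 1) !addn1 -addnS.
by rewrite modnDr !modn_small.
Qed.

Lemma cell_in_subgrid x y : x <= r.+1 -> y <= r.+1 ->
  (cell x y \in subgrid r a b) = (0 < x <= r) && (0 < y <= r).
Proof.
move=> xr yr; rewrite inE; apply/existsP/andP.
  move=> [i /existsP[j /andP[]]] /=; have ir := ltn_ord i; have jr := ltn_ord j.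
  by rewrite !wrap_offset; try lia; move=> /eqP -> /eqP ->; lia.
move=> [xin yin]; have xi : x.-1 < r by lia. have yj : y.-1 < r by lia.
exists (Ordinal xi); apply/existsP; exists (Ordinal yj) => /=.
by rewrite !wrap_offset ?prednK //; lia.
Qed.

Lemma subgrid_cell v : v \in subgrid r a b ->
  exists x y, [/\ 0 < x <= r, 0 < y <= r & v = cell x y].
Proof.
rewrite inE => /existsP[i /existsP[j /andP[/eqP ei /eqP ej]]].
exists i.+1, j.+1; split; rewrite ?ltn_ord //.
case: v ei ej => v1 v2 /= ei ej; congr pair; apply: val_inj => /=.
  by rewrite ei (_ : a + L' + i.+1 = a + i + L'.+1) ?modnDr //; lia.
by rewrite ej (_ : b + L' + j.+1 = b + j + L'.+1) ?modnDr //; lia.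
Qed.

Lemma pm1_wrapS t : pm1 (wrap t) (wrap t.+1).
Proof. by apply/orP; right; rewrite /= modnDml addn1. Qed.

Lemma pm1_wrap t w : pm1 (wrap t.+1) w -> w = wrap t.+2 \/ w = wrap t.
Proof.
case/orP => /eqP e; [right | left]; apply: val_inj => /=.
  apply/eqP; rewrite -[val w](modn_small (ltn_ord w)) -(eqn_modDr 1) !addn1.
  by rewrite addn1 in e; rewrite -e.
by rewrite e modnDml addn1.
Qed.

Lemma adj_cell_right x y : adj (cell x y) (cell x y.+1).
Proof. by rewrite /adj /= addnS pm1_wrapS eqxx orbT. Qed.

Lemma adj_cell_down x y : adj (cell x y) (cell x.+1 y).
Proof. by rewrite /adj /= addnS pm1_wrapS eqxx. Qed.

Lemma cell_adj x y v : 0 < x -> 0 < y -> adj (cell x y) v ->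
  [\/ v = cell x.+1 y, v = cell x.-1 y, v = cell x y.+1 | v = cell x y.-1].
Proof.
move=> x0 y0; case: v => v1 v2.
have ex : a + L' + x = (a + L' + x.-1).+1 by rewrite -addnS prednK.
have ey : b + L' + y = (b + L' + y.-1).+1 by rewrite -addnS prednK.
rewrite /adj /cell /= !addnS ex ey.
case/orP => /andP[/pm1_wrap [] -> /eqP <-].
- by constructor 1.
- by constructor 2.
- by constructor 3.
- by constructor 4.
Qed.

Lemma subgrid_edge_on_line u v : u \in subgrid r a b -> adj u v ->
  exists i (p : 'I_r.+1), [set u; v] = [set hline i p; hline i p.+1] \/
                          [set u; v] = [set vline i p; vline i p.+1].
Proof.
move=> /subgrid_cell[x [y [xr yr ->]]].
have xi : x.-1 < r by lia. have yi : y.-1 < r by lia.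
have xp : x < r.+1 by lia. have yp : y < r.+1 by lia.
have xp' : x.-1 < r.+1 by lia. have yp' : y.-1 < r.+1 by lia.
case/cell_adj; try lia; move=> ->.
- by exists (Ordinal yi), (Ordinal xp); right; rewrite /vline /= prednK //; lia.
- exists (Ordinal yi), (Ordinal xp'); right.
  by rewrite setUC /vline /= !prednK //; lia.
- by exists (Ordinal xi), (Ordinal yp); left; rewrite /hline /= prednK //; lia.
- exists (Ordinal xi), (Ordinal yp'); left.
  by rewrite setUC /hline /= !prednK //; lia.
Qed.

Lemma hline_ends i :
  hline i 0 \in boundary (subgrid r a b) /\ hline i r.+1 \in boundary (subgrid r a b).
Proof.
have ir := ltn_ord i.
split; [apply: (@in_boundary _ _ _ (cell i.+1 1)) | apply: (@in_boundary _ _ _ (cell i.+1 r))].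
- by rewrite cell_in_subgrid //; lia.
- by rewrite cell_in_subgrid //; lia.
- exact: adj_cell_right.
- by rewrite cell_in_subgrid //; lia.
- by rewrite cell_in_subgrid //; lia.
- by rewrite adj_sym adj_cell_right.
Qed.

Lemma vline_ends j :
  vline j 0 \in boundary (subgrid r a b) /\ vline j r.+1 \in boundary (subgrid r a b).
Proof.
have jr := ltn_ord j.
split; [apply: (@in_boundary _ _ _ (cell 1 j.+1)) | apply: (@in_boundary _ _ _ (cell r j.+1))].
- by rewrite cell_in_subgrid //; lia.
- by rewrite cell_in_subgrid //; lia.
- exact: adj_cell_down.
- by rewrite cell_in_subgrid //; lia.
- by rewrite cell_in_subgrid //; lia.
- by rewrite adj_sym adj_cell_down.
Qed.

Lemma hline_cover v : v \in subgrid r a b ->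
  exists i p, p <= r.+1 /\ v = hline i p.
Proof.
move=> /subgrid_cell[x [y [xr yr ->]]]; have xi : x.-1 < r by lia.
exists (Ordinal xi), y; split; first lia.
by rewrite /hline /= prednK //; lia.
Qed.

Lemma vline_cover v : v \in subgrid r a b ->
  exists j p, p <= r.+1 /\ v = vline j p.
Proof.
move=> /subgrid_cell[x [y [xr yr ->]]]; have yj : y.-1 < r by lia.
exists (Ordinal yj), x; split; first lia.
by rewrite /vline /= prednK //; lia.
Qed.

(* The subgrid has r^2 vertices, the cells with 1 <= x, y <= r being distinct. *)
Lemma card_subgrid : #|subgrid r a b| = r * r.
Proof.
have -> : subgrid r a b = [set cell x.1.+1 x.2.+1 | x : 'I_r * 'I_r].
  apply/setP => v; apply/idP/imsetP.
    move=> /subgrid_cell[x [y [xr yr ->]]].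
    have xi : x.-1 < r by lia. have yj : y.-1 < r by lia.
    by exists (Ordinal xi, Ordinal yj); rewrite //= !prednK //; lia.
  move=> [[i j] _ ->]; have ir := ltn_ord i; have jr := ltn_ord j.
  by rewrite cell_in_subgrid /=; lia.
rewrite card_imset ?card_prod ?card_ord //.
move=> [i j] [i' j'] /= [/eqP ei /eqP ej].
move: (ltn_ord i) (ltn_ord i') (ltn_ord j) (ltn_ord j') => ir i'r jr j'r.
move: ei ej; rewrite -!addnA !eqn_modDl !modn_small; try lia.
by move=> /eqP [ei] /eqP [ej]; congr pair; apply: val_inj.
Qed.

(* The block estimate: both families of lines satisfy family_bound, and
   they carry every monochromatic edge of the subgrid. *)
Lemma subgrid_mu_bound q (X c : {ffun V L'.+1 -> 'I_q}) :
  r * mu X (subgrid r a b) c + 2 * r.+1 * fcount X (subgrid r a b) c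
    <= 2 * r.+1 * (r * r).
Proof.
have rows := family_bound X c hline_ends hline_cover.
have cols := family_bound X c vline_ends vline_cover.
have := mu_le_mono_steps X c subgrid_edge_on_line.
rewrite card_ord in rows cols => /(leq_mul (leqnn r)); nia.
Qed.

End TorusSubgrid.

Unset Implicit Arguments.
Import Order.TTheory GRing.Theory Num.Theory.
Local Open Scope ring_scope.

Lemma ratio_bound (m f r : nat) : (0 < r)%N -> (f < r * r)%N ->
  (r * m + 2 * r.+1 * f <= 2 * r.+1 * (r * r))%N ->
  m%:R / (r * r - f)%:R <= 2 + 2 / r%:R :> rat.
Proof.
move=> r0 fr est; have r0' : 0 < r%:R :> rat by rewrite ltr0n.
rewrite ler_pdivrMr ?ltr0n ?subn_gt0 // -(ler_pM2l r0').
have -> : r%:R * ((2 + 2 / r%:R) * (r * r - f)%:R) = (2 * r.+1 * (r * r - f))%:R :> rat.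
  by rewrite !natrM -addn1 natrD; field; rewrite gt_eqF.
rewrite -natrM ler_nat mulnBr.
by move: est; set A := 2 * r.+1 * (r * r); set B := 2 * r.+1 * f; lia.
Qed.

Theorem lemma2p9 (L q r : nat) (hq : (0 < q)%N) (hr : (0 < r)%N)
  (hrL : (r <= L - 2)%N) :
  mu_plus q (subgrids L r) <= 2 + 2 / r%:R.
Proof.
case: L hrL => [|L'] hrL; first by move: hr hrL; lia.
have r_lt : (r < L')%N by move: hr hrL; lia.
have bound_ge0 : 0 <= 2 + 2 / r%:R :> rat by rewrite addr_ge0 // divr_ge0.
apply: bigmax_le => // S /imset2P[a b _ _ ->].
apply: bigmax_le => // X _; apply: bigmax_le => // f _.
move: (nat_of_ord f) (ltn_ord f) => {}f; rewrite card_subgrid // => fr.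
apply: bigmax_le => // c /eqP fc; rewrite card_subgrid //.
apply: ratio_bound => //; rewrite -fc.
exact: subgrid_mu_bound.
Qed.
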